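(* Assume that the covector $p_a$ satisfies $p_ap^a+\sigma u_au^a=0$ where $\sigma=\sigma_+$ or $\sigma=\sigma_-$. Let $\tilde g^{ab}=g^{ab}+\sigma F^{ac}F^{b}{}_{c}$ and $K^a=\tilde g^{ab}p_b$. Then $$\tilde g^{cd}p_cu_d=\tilde g^{cd}p_cv_d=0,\qquad \tilde g^{cd}u_cv_d=0,\qquad \tilde g^{cd}u_cu_d=\tilde g^{cd}v_cv_d=u^cu_c\,(1+\sigma F-\sigma^2G^2).$$ Consequently $K^ap_a=K^au_a=K^av_a=0$.
   Context: Let $F_{ab}$ be an antisymmetric tensor on an oriented 4-dimensional Lorentzian manifold with metric $g_{ab}$ (signature $(-,+,+,+)$; indices moved with $g$), $\varepsilon_{abcd}$ the volume form, ${}^{*}F_{ab}=\frac12\varepsilon_{abcd}F^{cd}$, $F=\frac12F_{ab}F^{ab}$, $G=-\frac14F_{ab}{}^{*}F^{ab}$. Let $\mathcal{L}(F,G)$ be smooth with partial derivatives $\mathcal{L}_F,\mathcal{L}_{FF},\mathcal{L}_{FG},\mathcal{L}_{GG}$ evaluated at the background invariants. $P=\mathcal{L}_{FF}\mathcal{L}_{GG}-\mathcal{L}_{FG}^2$, $M=\mathcal{L}_F^2+2\mathcal{L}_F\mathcal{L}_{FG}G-\frac12\mathcal{L}_F\mathcal{L}_{GG}F-PG^2$, $N=2\mathcal{L}_F\mathcal{L}_{FF}+\frac12\mathcal{L}_F\mathcal{L}_{GG}-PF$, $\sigma_\pm=\frac{N}{2M}\pm\sqrt{\frac{N^2}{4M^2}-\frac{P}{M}}$.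 Standing assumptions: $\mathcal{L}_F\neq0$, $M\neq0$, $1+\sigma_\pm F-\sigma_\pm^2G^2\neq0$. For a nonzero covector $p_a$ put $u_a=F_{ab}p^b$, $v_a={}^{*}F_{ab}p^b$. *)

(* pointwise (tensor-algebraic) formalization over a real
   closed field R, in a coordinate basis at a point of the manifold. *)
From HB Require Import structures.
From mathcomp Require Import all_boot all_order all_algebra.
Set Implicit Arguments. Unset Strict Implicit. Unset Printing Implicit Defensive.
Import Order.TTheory GRing.Theory Num.Theory.
Local Open Scope ring_scope.

Section Defs.
Variable R : rcfType.
Implicit Types (g F : 'M[R]_4) (p u : 'I_4 -> R).

(* Lorentzian metric of signature (-,+,+,+) (Sylvester normal form). *)
Definition minkowski : 'M[R]_4 :=
  diag_mx (\row_(i < 4) (if i == ord0 then -1 else 1)).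
Definition lorentzian g : Prop :=
  g^T = g /\ exists P : 'M[R]_4, P \in unitmx /\ P^T *m g *m P = minkowski.

Definition antisym F : Prop := forall a b, F a b = - F b a.

Definition ginv g : 'M[R]_4 := invmx g.

Definition levi (a b c d : 'I_4) : R :=
  \det (\matrix_(i < 4, j < 4) ((j == nth ord0 [:: a; b; c; d] i)%:R : R)).

(* volume form eps_{abcd} in a coordinate basis; [o] = true iff the basis is
   positively oriented (eps = sqrt|det g| [abcd]), otherwise the sign flips. *)
Definition eps (o : bool) g (a b c d : 'I_4) : R :=
  (if o then 1 else -1) * Num.sqrt `|\det g| * levi a b c d.

Definition up2 g F : 'M[R]_4 := ginv g *m F *m (ginv g)^T.
Definition up1 g F : 'M[R]_4 := ginv g *m F.
Definition upv g p : 'I_4 -> R := fun a => \sum_(b < 4) ginv g a b * p b.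

Definition dual o g F : 'M[R]_4 :=
  \matrix_(a < 4, b < 4)
     (2^-1 * \sum_(c < 4) \sum_(d < 4) eps o g a b c d * up2 g F c d).

Definition Finvar g F : R := 2^-1 * \sum_(a < 4) \sum_(b < 4) F a b * up2 g F a b.
Definition Ginvar o g F : R :=
  - 4^-1 * \sum_(a < 4) \sum_(b < 4) F a b * up2 g (dual o g F) a b.

Definition contr g (T : 'M[R]_4) p : 'I_4 -> R :=
  fun a => \sum_(b < 4) T a b * upv g p b.

Definition bil (h : 'M[R]_4) (x y : 'I_4 -> R) : R :=
  \sum_(a < 4) \sum_(b < 4) h a b * x a * y b.

Definition cP (LFF LFG LGG : R) : R := LFF * LGG - LFG ^+ 2.
Definition cM (LF LFF LFG LGG Fi Gi : R) : R :=
  LF ^+ 2 + 2 * LF * LFG * Gi - 2^-1 * LF * LGG * Fi - cP LFF LFG LGG * Gi ^+ 2.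
Definition cN (LF LFF LFG LGG Fi : R) : R :=
  2 * LF * LFF + 2^-1 * LF * LGG - cP LFF LFG LGG * Fi.
Definition discr (LF LFF LFG LGG Fi Gi : R) : R :=
  let M := cM LF LFF LFG LGG Fi Gi in let N := cN LF LFF LFG LGG Fi in
  N ^+ 2 / (4 * M ^+ 2) - cP LFF LFG LGG / M.
Definition sigma_pm (plus : bool) (LF LFF LFG LGG Fi Gi : R) : R :=
  let M := cM LF LFF LFG LGG Fi Gi in let N := cN LF LFF LFG LGG Fi in
  N / (2 * M) + (if plus then 1 else -1) * Num.sqrt (discr LF LFF LFG LGG Fi Gi).

Definition gtilde (sigma : R) g F : 'M[R]_4 :=
  \matrix_(a < 4, b < 4)
     (ginv g a b + sigma * \sum_(c < 4) up2 g F a c * up1 g F b c).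

Definition Kvec (sigma : R) g F p : 'I_4 -> R :=
  fun a => \sum_(b < 4) gtilde sigma g F a b * p b.
Definition dotv (x y : 'I_4 -> R) : R := \sum_(a < 4) x a * y a.

End Defs.

From HB Require Import structures.
From mathcomp Require Import all_boot all_order all_algebra.
From mathcomp Require Import perm ring.
Set Implicit Arguments. Unset Strict Implicit. Unset Printing Implicit Defensive.
Import Order.TTheory GRing.Theory Num.Theory.
Local Open Scope ring_scope.

(* Write M = g^-1 F and D = g^-1 *F for the mixed tensors F^a_b and *F^a_b.
   In four dimensions M^2 - D^2 = -F and MD = DM = G (times the identity);
   both are checked in an orthonormal frame, where the Hodge dual is explicit,
   and carried back to arbitrary coordinates by conjugation.  Then u = -pM,
   v = -pD and gt = (1 - sigma M^2) g^-1; M and D are antisymmetric for gt,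
   and M^4 = G^2 - F M^2.  With these relations every claimed identity reduces
   to the null condition p.p + sigma u.u = 0. *)

(** * Bilinear forms and the effective metric *)

Definition bform (R : nzRingType) n (A : 'M[R]_n) (x y : 'rV[R]_n) : R :=
  (x *m A *m y^T) 0 0.

Section Form.
Variables (R : comNzRingType) (n : nat).
Implicit Types (A B X : 'M[R]_n) (x y : 'rV[R]_n).

Lemma bform_tr A x y : bform A x y = bform A^T y x.
Proof.
rewrite /bform; transitivity ((x *m A *m y^T)^T 0 0); first by rewrite [RHS]mxE.
by rewrite !trmx_mul trmxK mulmxA.
Qed.

Lemma bform_mull A X x y : bform A (x *m X) y = bform (X *m A) x y.
Proof. by rewrite /bform mulmxA. Qed.

Lemma bform_mulr A X x y : bform A x (y *m X) = bform (A *m X^T) x y.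
Proof. by rewrite /bform trmx_mul !mulmxA. Qed.

Lemma bformNl A x y : bform A (- x) y = - bform A x y.
Proof. by rewrite /bform !mulNmx [LHS]mxE. Qed.

Lemma bformNr A x y : bform A x (- y) = - bform A x y.
Proof. by rewrite bform_tr bformNl -bform_tr. Qed.

Lemma bformN A x y : bform (- A) x y = - bform A x y.
Proof. by rewrite /bform mulmxN mulNmx [LHS]mxE. Qed.

Lemma bformDl A B x y : bform (A + B) x y = bform A x y + bform B x y.
Proof. by rewrite /bform mulmxDr mulmxDl !mxE. Qed.

Lemma bformBl A B x y : bform (A - B) x y = bform A x y - bform B x y.
Proof. by rewrite /bform mulmxBr mulmxBl !mxE. Qed.

Lemma bformZl c A x y : bform (c *: A) x y = c * bform A x y.
Proof. by rewrite /bform -scalemxAr -scalemxAl mxE. Qed.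
End Form.

Lemma bform_skew (R : numDomainType) n (S : 'M[R]_n) x : S^T = - S -> bform S x x = 0.
Proof.
move=> ST; have : bform S x x *+ 2 = 0.
  by rewrite mulr2n {2}bform_tr ST /bform mulmxN mulNmx [X in _ + X]mxE subrr.
by move/eqP; rewrite mulrn_eq0 => /eqP.
Qed.

(* h, M, D, phi and gam stand for g^-1, F^a_b, *F^a_b, F and G; vectors are rows. *)
Section EffectiveMetric.
Variables (R : numDomainType) (n : nat) (h M D : 'M[R]_n) (phi gam sigma : R).
Hypotheses (h_sym : h^T = h) (Mh_skew : (M *m h)^T = - (M *m h))
  (Dh_skew : (D *m h)^T = - (D *m h)).
Hypotheses (MD : M *m D = gam%:M) (DM : D *m M = gam%:M)
  (MM : M *m M = D *m D - phi%:M).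
Variable p : 'rV[R]_n.
Let u := - (p *m M).
Let v := - (p *m D).
Let gt := h - sigma *: (M *m M *m h).

Lemma skew_trmx X : (X *m h)^T = - (X *m h) -> h *m X^T = - (X *m h).
Proof. by move=> <-; rewrite trmx_mul h_sym. Qed.

Let hMT : h *m M^T = - (M *m h) := skew_trmx Mh_skew.
Let hDT : h *m D^T = - (D *m h) := skew_trmx Dh_skew.

Lemma MMh_sym : (M *m M *m h)^T = M *m M *m h.
Proof.
by rewrite !trmx_mul h_sym mulmxA hMT mulNmx -[M *m h *m _]mulmxA hMT mulmxN opprK mulmxA.
Qed.

Lemma gt_sym : gt^T = gt.
Proof. by rewrite /gt linearB /= linearZ /= h_sym MMh_sym. Qed.

Lemma gt_skewM : gt *m M^T = - (M *m gt).
Proof.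
rewrite /gt mulmxBl mulmxBr -!scalemxAl -scalemxAr -!mulmxA hMT !mulmxN.
by rewrite !mulmxA opprB scalerN opprK addrC.
Qed.

Lemma MMD_comm : M *m M *m D = D *m (M *m M).
Proof. by rewrite -mulmxA MD mulmxA DM mul_mx_scalar mul_scalar_mx. Qed.

Lemma gt_skewD : gt *m D^T = - (D *m gt).
Proof.
rewrite /gt mulmxBl mulmxBr -!scalemxAl -scalemxAr -!mulmxA hDT !mulmxN.
by rewrite !mulmxA MMD_comm !mulmxA scalerN opprK opprB addrC.
Qed.

Lemma M4E : M *m M *m (M *m M) = (gam ^+ 2)%:M - phi *: (M *m M).
Proof.
rewrite {2}MM mulmxBr mul_mx_scalar -mulmxA [M *m (D *m D)]mulmxA MD.
by rewrite mul_scalar_mx -scalemxAr MD scale_scalar_mx expr2.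
Qed.

Lemma bform_gt_skew X y : gt *m X^T = - (X *m gt) -> bform gt y (y *m X) = 0.
Proof.
move=> gtX; rewrite bform_mulr bform_skew // gtX linearN /= trmx_mul gt_sym gtX opprK //.
Qed.

Lemma bform_MMh : bform (M *m M *m h) p p = - bform h u u.
Proof.
rewrite /u bformNl bformNr opprK bform_mull bform_mulr -[M *m h *m _]mulmxA hMT.
by rewrite mulmxN mulmxA bformN opprK.
Qed.

Lemma bform_gt_self : bform gt p p = bform h p p + sigma * bform h u u.
Proof. by rewrite /gt bformBl bformZl bform_MMh mulrN opprK. Qed.

Hypothesis null : bform h p p + sigma * bform h u u = 0.

Lemma bform_gt_sq X : gt *m X^T = - (X *m gt) ->
  bform gt (p *m X) (p *m X) = - bform (X *m X *m gt) p p.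
Proof. by move=> gtX; rewrite bform_mull bform_mulr -mulmxA gtX mulmxN mulmxA bformN. Qed.

(* The factor 1 + sigma phi - sigma^2 gam^2 comes from M4E. *)
Lemma bform_gt_u : bform gt u u = bform h u u * (1 + sigma * phi - sigma ^+ 2 * gam ^+ 2).
Proof.
have hpp : bform h p p = - sigma * bform h u u by rewrite -[LHS]subr0 -null; ring.
rewrite /u bformNl bformNr opprK bform_gt_sq ?gt_skewM // /gt mulmxBr -scalemxAr.
rewrite [M *m M *m (M *m M *m h)]mulmxA M4E mulmxBl mul_scalar_mx -scalemxAl.
by rewrite bformBl bformZl bformBl !bformZl bform_MMh hpp; ring.
Qed.

Lemma bform_gt_v : bform gt v v = bform gt u u.
Proof.
rewrite /v /u !bformNl !bformNr !opprK !bform_gt_sq ?gt_skewM ?gt_skewD //.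
have -> : D *m D = M *m M + phi%:M by rewrite MM subrK.
by rewrite mulmxDl mul_scalar_mx bformDl bformZl bform_gt_self null mulr0 addr0.
Qed.

Lemma bform_gt_uv : bform gt u v = 0.
Proof.
rewrite /u /v bformNl bformNr opprK bform_mulr gt_skewD bformN bform_mull mulmxA MD.
by rewrite mul_scalar_mx bformZl bform_gt_self null mulr0 oppr0.
Qed.

Lemma effective_metric_orthogonality :
  [/\ bform gt p u = 0, bform gt p v = 0, bform gt u v = 0,
      bform gt u u = bform h u u * (1 + sigma * phi - sigma ^+ 2 * gam ^+ 2)
    & bform gt v v = bform h u u * (1 + sigma * phi - sigma ^+ 2 * gam ^+ 2)] /\
  [/\ bform gt p p = 0, bform gt u p = 0 & bform gt v p = 0].
Proof.
have pu : bform gt p u = 0 by rewrite bformNr bform_gt_skew ?gt_skewM ?oppr0.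
have pv : bform gt p v = 0 by rewrite bformNr bform_gt_skew ?gt_skewD ?oppr0.
rewrite (bform_tr _ u p) (bform_tr _ v p) gt_sym bform_gt_v bform_gt_u bform_gt_self null.
by rewrite pu pv bform_gt_uv.
Qed.

End EffectiveMetric.

(** * The Levi-Civita symbol *)

Notation o0 := (@Ordinal 4 0 isT).
Notation o1 := (@Ordinal 4 1 isT).
Notation o2 := (@Ordinal 4 2 isT).
Notation o3 := (@Ordinal 4 3 isT).

Lemma ord4_cases (a : 'I_4) : [\/ a = o0, a = o1, a = o2 | a = o3].
Proof.
by case: a => [[|[|[|[|//]]]] ?]; [apply: Or41|apply: Or42|apply: Or43|apply: Or44];
  apply: val_inj.
Qed.

Lemma sum4 (R : nmodType) (f : 'I_4 -> R) : \sum_(i < 4) f i = f o0 + f o1 + f o2 + f o3.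
Proof.
rewrite !big_ord_recl big_ord0 addr0 !addrA.
by congr (f _ + f _ + f _ + f _); apply: val_inj.
Qed.

Lemma det_tperm_rows (R : comNzRingType) n (A B : 'M[R]_n) i1 i2 : i1 != i2 ->
  (forall k j, B k j = A (tperm i1 i2 k) j) -> \det B = - \det A.
Proof.
move=> ne HB; have -> : B = row_perm (tperm i1 i2) A by apply/matrixP=> k j; rewrite !mxE HB.
by rewrite row_permE det_mulmx det_perm odd_tperm ne expr1 mulN1r.
Qed.

Section Levi.
Variable R : rcfType.
Let L := levi R.

Lemma levi_swap12 a b c d : L a b c d = - L b a c d.
Proof.
apply: (det_tperm_rows (i1 := o0) (i2 := o1)) => // k l; rewrite !mxE.
by case: (ord4_cases k) => ->; rewrite ?tpermL ?tpermR ?tpermD.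
Qed.

Lemma levi_swap23 a b c d : L a b c d = - L a c b d.
Proof.
apply: (det_tperm_rows (i1 := o1) (i2 := o2)) => // k l; rewrite !mxE.
by case: (ord4_cases k) => ->; rewrite ?tpermL ?tpermR ?tpermD.
Qed.

Lemma levi_swap34 a b c d : L a b c d = - L a b d c.
Proof.
apply: (det_tperm_rows (i1 := o2) (i2 := o3)) => // k l; rewrite !mxE.
by case: (ord4_cases k) => ->; rewrite ?tpermL ?tpermR ?tpermD.
Qed.

Lemma levi_eq12 a c d : L a a c d = 0.
Proof. by apply: (determinant_alternate (i1 := o0) (i2 := o1)) => // l; rewrite !mxE. Qed.
Lemma levi_eq13 a b d : L a b a d = 0.
Proof. by apply: (determinant_alternate (i1 := o0) (i2 := o2)) => // l; rewrite !mxE. Qed.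
Lemma levi_eq14 a b c : L a b c a = 0.
Proof. by apply: (determinant_alternate (i1 := o0) (i2 := o3)) => // l; rewrite !mxE. Qed.
Lemma levi_eq23 a b d : L a b b d = 0.
Proof. by apply: (determinant_alternate (i1 := o1) (i2 := o2)) => // l; rewrite !mxE. Qed.
Lemma levi_eq24 a b c : L a b c b = 0.
Proof. by apply: (determinant_alternate (i1 := o1) (i2 := o3)) => // l; rewrite !mxE. Qed.
Lemma levi_eq34 a b c : L a b c c = 0.
Proof. by apply: (determinant_alternate (i1 := o2) (i2 := o3)) => // l; rewrite !mxE. Qed.

Lemma levi0123 : L o0 o1 o2 o3 = 1.
Proof.
rewrite /L /levi -[RHS](det1 R 4); congr (\det _); apply/matrixP => i j.
by rewrite !mxE; case: (ord4_cases i) => ->; rewrite eq_sym.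
Qed.
End Levi.

Definition levi_nat (R : rcfType) (a b c d : nat) : R :=
  if uniq [:: a; b; c; d] then
    (if odd ((b < a) + (c < a) + (d < a) + (c < b) + (d < b) + (d < c))%N then -1 else 1)
  else 0.

Ltac sort_levi :=
  repeat match goal with
  | |- context[levi ?r (@Ordinal _ ?a _) (@Ordinal _ ?b _) ?c ?d] =>
      lazymatch eval compute in (Nat.ltb b a) with true =>
        rewrite [levi r (@Ordinal _ a _) (@Ordinal _ b _) c d]levi_swap12 end
  | |- context[levi ?r ?x (@Ordinal _ ?a _) (@Ordinal _ ?b _) ?d] =>
      lazymatch eval compute in (Nat.ltb b a) with true =>
        rewrite [levi r x (@Ordinal _ a _) (@Ordinal _ b _) d]levi_swap23 end
  | |- context[levi ?r ?x ?y (@Ordinal _ ?a _) (@Ordinal _ ?b _)] =>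
      lazymatch eval compute in (Nat.ltb b a) with true =>
        rewrite [levi r x y (@Ordinal _ a _) (@Ordinal _ b _)]levi_swap34 end
  end.

Lemma levi_natE (R : rcfType) (a b c d : 'I_4) :
  levi R a b c d = levi_nat R a b c d.
Proof.
case: (ord4_cases a) => ->; case: (ord4_cases b) => ->;
case: (ord4_cases c) => ->; case: (ord4_cases d) => ->; rewrite /levi_nat /=;
rewrite ?levi_eq12 ?levi_eq13 ?levi_eq14 ?levi_eq23 ?levi_eq24 ?levi_eq34 //;
sort_levi; rewrite levi0123 ?opprK //.
Qed.

Section LeviTransform.
Variable R : rcfType.

Definition setrow n (A : 'M[R]_n) i0 (x : 'rV[R]_n) : 'M[R]_n :=
  \matrix_(i, k) if i == i0 then x 0 k else A i k.

Lemma det_setrowD n (A : 'M[R]_n) i0 x y b c :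
  \det (setrow A i0 (b *: x + c *: y)) =
  b * \det (setrow A i0 x) + c * \det (setrow A i0 y).
Proof.
apply: (determinant_multilinear (i0 := i0)).
- by apply/rowP => k; rewrite !mxE eqxx ?mxE.
- by apply/matrixP => i k; rewrite !mxE eq_sym (negbTE (neq_lift _ _)).
- by apply/matrixP => i k; rewrite !mxE eq_sym (negbTE (neq_lift _ _)).
Qed.

Lemma det_setrow_sum n (A : 'M[R]_n) i0 (r : seq 'I_n) (cf : 'I_n -> R) :
  \det (setrow A i0 (\sum_(j <- r) cf j *: delta_mx 0 j)) =
  \sum_(j <- r) cf j * \det (setrow A i0 (delta_mx 0 j)).
Proof.
elim: r => [|j r IH].
  by have := det_setrowD A i0 0 0 0 0; rewrite !big_nil !scale0r addr0 !mul0r addr0.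
by rewrite !big_cons -IH -[X in cf j *: _ + X]scale1r det_setrowD mul1r.
Qed.

Lemma det_row_expand n (A : 'M[R]_n) i0 :
  \det A = \sum_j A i0 j * \det (setrow A i0 (delta_mx 0 j)).
Proof.
have {1}-> : A = setrow A i0 (\sum_j (row i0 A) 0 j *: delta_mx 0 j).
  apply/matrixP => i k; rewrite !mxE -row_sum_delta.
  by case: eqP => [->|]; rewrite ?mxE.
by rewrite det_setrow_sum; apply: eq_bigr => j _; rewrite mxE.
Qed.

Lemma det4_levi (M : 'M[R]_4) :
  \det M = \sum_a \sum_b \sum_c \sum_d
     (M o0 a * M o1 b * M o2 c * M o3 d * levi R a b c d).
Proof.
rewrite (det_row_expand _ o0); apply: eq_bigr => a _.
rewrite (det_row_expand _ o1) big_distrr /=; apply eq_bigr => b _.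
rewrite (det_row_expand _ o2) !big_distrr /=; apply eq_bigr => c _.
rewrite (det_row_expand _ o3) !big_distrr /=; apply eq_bigr => d _.
have -> : \det (setrow (setrow (setrow (setrow M o0 (delta_mx 0 a)) o1 (delta_mx 0 b))
              o2 (delta_mx 0 c)) o3 (delta_mx 0 d)) = levi R a b c d.
  rewrite /levi; congr (\det _); apply/matrixP => i j; rewrite !mxE.
  by case: (ord4_cases i) => -> /=; rewrite ?mxE /= eq_sym.
by rewrite !mxE /= !mulrA.
Qed.

Lemma levi_transform (P : 'M[R]_4) i j k l :
  \sum_a \sum_b \sum_c \sum_d (levi R a b c d * P a i * P b j * P c k * P d l)
  = \det P * levi R i j k l.
Proof.
pose E := \matrix_(r < 4, c < 4) ((c == nth ord0 [:: i; j; k; l] r)%:R : R).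
have EP r c : (E *m P^T) r c = P c (nth ord0 [:: i; j; k; l] r).
  rewrite !mxE (bigD1 (nth ord0 [:: i; j; k; l] r)) //= !mxE eqxx mul1r.
  by rewrite big1 ?addr0 // => m /negbTE mr; rewrite !mxE mr mul0r.
have -> : \det P * levi R i j k l = \det (E *m P^T) by rewrite det_mulmx det_tr mulrC.
rewrite det4_levi.
apply eq_bigr => a _; apply eq_bigr => b _; apply eq_bigr => c _;
apply eq_bigr => d _; rewrite !EP /=; ring.
Qed.
End LeviTransform.

(** * Orthonormal frames *)

Section Minkowski.
Variable R : rcfType.
Local Notation eta := (minkowski R).

Definition eta_nat (i j : nat) : R := if i == j then (if i == 0%N then -1 else 1) else 0.

Lemma minkowskiE : eta = \matrix_(i, j) eta_nat i j.
Proof.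
apply/matrixP => i j; rewrite !mxE.
by case: (ord4_cases i) => ->; case: (ord4_cases j) => ->; rewrite /eta_nat /= ?mulr1n ?mulr0n.
Qed.

Lemma minkowski_mulmx (X : 'M[R]_4) : eta *m X = \matrix_(i, j) (eta_nat i i * X i j).
Proof. by rewrite mul_diag_mx; apply/matrixP => i j; rewrite !mxE; case: (ord4_cases i) => ->. Qed.

Lemma minkowski_sym : eta^T = eta.
Proof. by rewrite tr_diag_mx. Qed.

Lemma minkowski_sq : eta *m eta = 1%:M.
Proof.
rewrite minkowskiE; apply/matrixP => i j; rewrite !mxE sum4 !mxE.
by case: (ord4_cases i) => ->; case: (ord4_cases j) => ->; rewrite /eta_nat /=; ring.
Qed.

Lemma det_minkowski : \det eta = -1.
Proof. by rewrite det_diag !big_ord_recl big_ord0 !mxE /=; ring. Qed.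
End Minkowski.

Section OrthonormalFrame.
Variables (R : rcfType) (g P : 'M[R]_4).
Hypotheses (P_unit : P \in unitmx) (gP : P^T *m g *m P = minkowski R).
Local Notation eta := (minkowski R).

Lemma ginv_frame : ginv g = P *m eta *m P^T.
Proof.
have PT_unit : P^T \in unitmx by rewrite unitmx_tr.
have g_frame : g = invmx P^T *m eta *m invmx P.
  by rewrite -gP !mulmxA mulVmx // mul1mx mulmxK.
have g_inv : g *m (P *m eta *m P^T) = 1%:M.
  rewrite g_frame !mulmxA mulmxKV // -[_ *m eta *m eta]mulmxA minkowski_sq mulmx1 mulVmx //.
have [g_unit _] := mulmx1_unit g_inv.
by rewrite /ginv -[RHS](mulKmx g_unit) g_inv mulmx1.
Qed.

Lemma ginv_sym : (ginv g)^T = ginv g.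
Proof. by rewrite ginv_frame !trmx_mul trmxK minkowski_sym mulmxA. Qed.

Lemma volume_factor_sq (o : bool) :
  ((if o then 1 else -1) * Num.sqrt `|\det g| * \det P) ^+ 2 = 1.
Proof.
have detgP : \det g * \det P ^+ 2 = -1.
  by have := congr1 determinant gP; rewrite !det_mulmx det_tr det_minkowski => <-; ring.
rewrite !exprMn sqr_sqrtr ?normr_ge0 // -(ger0_norm (sqr_ge0 (\det P))) -mulrA -normrM detgP.
by rewrite normrN1 mulr1; case: o; rewrite ?sqrrN expr1n.
Qed.
End OrthonormalFrame.

Section DualFrame.
Variable R : rcfType.
Local Notation eta := (minkowski R).
Local Notation I4 := 'I_4.

Lemma exchange_big5 (H : I4 -> I4 -> I4 -> I4 -> I4 -> R) :
  \sum_a \sum_b \sum_c \sum_d \sum_k H a b c d k =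
  \sum_k \sum_a \sum_b \sum_c \sum_d H a b c d k.
Proof.
transitivity (\sum_a \sum_b \sum_c \sum_k \sum_d H a b c d k).
  by apply eq_bigr=> a _; apply eq_bigr=> b _; apply eq_bigr=> c _; exact: exchange_big.
transitivity (\sum_a \sum_b \sum_k \sum_c \sum_d H a b c d k).
  by apply eq_bigr=> a _; apply eq_bigr=> b _; exact: exchange_big.
transitivity (\sum_a \sum_k \sum_b \sum_c \sum_d H a b c d k).
  by apply eq_bigr=> a _; exact: exchange_big.
exact: exchange_big.
Qed.

Lemma exchange_big6 (H : I4 -> I4 -> I4 -> I4 -> I4 -> I4 -> R) :
  \sum_a \sum_b \sum_c \sum_d \sum_k \sum_l H a b c d k l =
  \sum_k \sum_l \sum_a \sum_b \sum_c \sum_d H a b c d k l.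
Proof.
rewrite (exchange_big5 (fun a b c d k => \sum_l H a b c d k l)).
by apply eq_bigr => k _; exact: (exchange_big5 (fun a b c d l => H a b c d k l)).
Qed.

Lemma big_distr4 (G : I4 -> I4 -> I4 -> I4 -> R) (x y : R) :
  \sum_a \sum_b \sum_c \sum_d (x * G a b c d * y) =
  x * (\sum_a \sum_b \sum_c \sum_d G a b c d) * y.
Proof.
rewrite big_distrr big_distrl /=; apply eq_bigr => a _.
rewrite big_distrr big_distrl /=; apply eq_bigr => b _.
rewrite big_distrr big_distrl /=; apply eq_bigr => c _.
by rewrite big_distrr big_distrl /=; apply eq_bigr => d _.
Qed.

Definition hodge_eta (X : 'M[R]_4) : 'M[R]_4 :=
  \matrix_(i, j) (2^-1 * \sum_k \sum_l levi R i j k l * (eta *m X *m eta) k l).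

(* [E] stands for [levi]; keeping it abstract stops the big-operator rewrites
   from unfolding the determinant that defines [levi]. *)
Lemma pullback_dual_entry (E : I4 -> I4 -> I4 -> I4 -> R) (s : R) (P X : 'M[R]_4) i j :
  \sum_b (\sum_a P a i * (2^-1 * \sum_c \sum_d (s * E a b c d) * (P *m X *m P^T) c d)) * P b j
  = \sum_a \sum_b \sum_c \sum_d \sum_k \sum_l
      (2^-1 * s * (E a b c d * P a i * P b j * P c k * P d l) * X k l).
Proof.
rewrite [RHS]exchange_big /=; apply eq_bigr => b _.
rewrite big_distrl /=; apply eq_bigr => a _.
rewrite !big_distrr !big_distrl /=; apply eq_bigr => c _.
rewrite !big_distrr !big_distrl /=; apply eq_bigr => d _.
rewrite !mxE [RHS]exchange_big /= !big_distrr !big_distrl /=; apply eq_bigr => l _.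
rewrite !mxE big_distrl /= !big_distrr /= big_distrl /=; apply eq_bigr => k _.
ring.
Qed.

Lemma dual_frame o (g P F : 'M[R]_4) :
  P \in unitmx -> P^T *m g *m P = eta ->
  P^T *m dual o g F *m P =
  ((if o then 1 else -1) * Num.sqrt `|\det g| * \det P) *: hodge_eta (P^T *m F *m P).
Proof.
move=> P_unit gP.
set s := (if o then 1 else -1) * Num.sqrt `|\det g|.
set X := eta *m (P^T *m F *m P) *m eta.
have up2F : up2 g F = P *m X *m P^T.
  by rewrite /up2 (ginv_sym P_unit gP) (ginv_frame P_unit gP) /X !mulmxA.
apply/matrixP => i j; rewrite !mxE.
have -> : \sum_b (P^T *m dual o g F) i b * P b j =
  \sum_b (\sum_a P a i * (2^-1 * \sum_c \sum_d (s * levi R a b c d) * (P *m X *m P^T) c d)) * P b j.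
  apply eq_bigr => b _; rewrite !mxE; congr (_ * _); apply eq_bigr => a _.
  by rewrite !mxE up2F.
rewrite pullback_dual_entry exchange_big6 [RHS]mulrA [RHS]big_distrr /=.
apply eq_bigr => k _; rewrite [RHS]big_distrr /=; apply eq_bigr => l _.
rewrite big_distr4 levi_transform /X; ring.
Qed.
End DualFrame.

Section SkewFrame.
Variable R : rcfType.
Local Notation eta := (minkowski R).
Variables f01 f02 f03 f12 f13 f23 : R.

Definition skew4_nat (i j : nat) : R :=
  match i, j with
  | 0, 1 => f01 | 0, 2 => f02 | 0, 3 => f03 | 1, 2 => f12 | 1, 3 => f13 | 2, 3 => f23
  | 1, 0 => - f01 | 2, 0 => - f02 | 3, 0 => - f03 | 2, 1 => - f12 | 3, 1 => - f13
  | 3, 2 => - f23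
  | _, _ => 0 end.

(* Electric and magnetic components trade places under the Hodge star. *)
Definition skew4_dual_nat (i j : nat) : R :=
  match i, j with
  | 0, 1 => f23 | 0, 2 => - f13 | 0, 3 => f12 | 1, 2 => - f03 | 1, 3 => f02 | 2, 3 => - f01
  | 1, 0 => - f23 | 2, 0 => f13 | 3, 0 => - f12 | 2, 1 => f03 | 3, 1 => - f02
  | 3, 2 => f01
  | _, _ => 0 end.

Definition skew4 : 'M[R]_4 := \matrix_(i, j) skew4_nat i j.
Definition skew4_dual : 'M[R]_4 := \matrix_(i, j) skew4_dual_nat i j.

Lemma hodge_eta_skew4 : hodge_eta skew4 = skew4_dual.
Proof.
apply/matrixP => i j; rewrite /hodge_eta minkowskiE !(mxE, sum4) !levi_natE /levi_nat /eta_nat.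
by case: (ord4_cases i) => ->; case: (ord4_cases j) => -> /=; field.
Qed.

Let A := eta *m skew4.
Let C := eta *m skew4_dual.

Ltac entrywise :=
  rewrite !minkowski_mulmx /mxtrace; apply/matrixP;
  let i := fresh "i" in let j := fresh "j" in move=> i j;
  rewrite !(mxE, sum4) /eta_nat;
  case: (ord4_cases i) => ->; case: (ord4_cases j) => -> /=.

Lemma skew4_sq_identity : A *m A - C *m C = (2^-1 * \tr (A *m A))%:M.
Proof. by rewrite /A /C; entrywise; field. Qed.

Lemma skew4_dual_identity : A *m C = (4^-1 * \tr (A *m C))%:M.
Proof. by rewrite /A /C; entrywise; field. Qed.

Lemma skew4_dual_comm : C *m A = A *m C.
Proof. by rewrite /A /C; entrywise; ring. Qed.
End SkewFrame.

Lemma skew4_of (R : rcfType) (X : 'M[R]_4) : X^T = - X ->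
  X = skew4 (X o0 o1) (X o0 o2) (X o0 o3) (X o1 o2) (X o1 o3) (X o2 o3).
Proof.
move=> X_skew; have Xji i j : X j i = - X i j.
  by have := congr1 (fun Y : 'M[R]_4 => Y i j) X_skew; rewrite !mxE.
have Xii i : X i i = 0.
  by apply/eqP; have /eqP := Xji i i; rewrite -addr_eq0 -mulr2n mulrn_eq0.
apply/matrixP => i j; rewrite mxE.
by case: (ord4_cases i) => ->; case: (ord4_cases j) => -> /=; rewrite ?Xii //; apply: Xji.
Qed.

Lemma minkowski_field_identities (R : rcfType) (X : 'M[R]_4) : X^T = - X ->
  let A := minkowski R *m X in let C := minkowski R *m hodge_eta X in
  [/\ A *m A - C *m C = (2^-1 * \tr (A *m A))%:M,
      A *m C = (4^-1 * \tr (A *m C))%:M & C *m A = A *m C].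
Proof.
move=> /skew4_of ->; rewrite hodge_eta_skew4.
by split; [apply: skew4_sq_identity | apply: skew4_dual_identity | apply: skew4_dual_comm].
Qed.

(** * The field identities in arbitrary coordinates *)

Section Similarity.
Variables (R : comUnitRingType) (n : nat) (P : 'M[R]_n.+1).
Hypothesis P_unit : P \in unitmx.
Local Notation conj A := (P *m A *m invmx P).

Lemma conj_mulmx A B : conj A *m conj B = conj (A *m B).
Proof. by rewrite !mulmxA mulmxKV. Qed.

Lemma conj_scalar a : conj a%:M = a%:M.
Proof. by rewrite mul_mx_scalar -scalemxAl mulmxV // scalemx1. Qed.

Lemma mxtrace_conj A : \tr (conj A) = \tr A.
Proof. by rewrite mxtrace_mulC mulmxA mulVmx // mul1mx. Qed.
End Similarity.

Section FieldInvariants.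
Variable R : rcfType.
Local Notation eta := (minkowski R).

Lemma dual_skew o (g F : 'M[R]_4) : (dual o g F)^T = - dual o g F.
Proof.
apply/matrixP => a b; rewrite !mxE -mulrN -sumrN; congr (_ * _).
apply: eq_bigr => c _; rewrite -sumrN; apply: eq_bigr => d _.
by rewrite /eps levi_swap12 !mulrN mulNr.
Qed.

Lemma sum_mul_trace (A B : 'M[R]_4) :
  \sum_a \sum_b A a b * B a b = \tr (A *m B^T).
Proof. by apply: eq_bigr => a _; rewrite !mxE; apply: eq_bigr => b _; rewrite !mxE. Qed.

Variables (o : bool) (g F P : 'M[R]_4).
Hypotheses (P_unit : P \in unitmx) (gP : P^T *m g *m P = eta) (F_skew : F^T = - F).
Local Notation h := (ginv g).
Local Notation M := (up1 g F).
Local Notation D := (up1 g (dual o g F)).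

Lemma up2_skew_trmx T : T^T = - T -> (up2 g T)^T = - (h *m T *m h).
Proof.
by move=> T_skew; rewrite /up2 !trmx_mul trmxK (ginv_sym P_unit gP) T_skew mulNmx mulmxN mulmxA.
Qed.

Lemma Finvar_trace : Finvar g F = - 2^-1 * \tr (M *m M).
Proof.
rewrite /Finvar sum_mul_trace up2_skew_trmx // mulmxN linearN /= !mulmxA.
by rewrite mxtrace_mulC /up1 !mulmxA mulrN mulNr.
Qed.

Lemma Ginvar_trace : Ginvar o g F = 4^-1 * \tr (M *m D).
Proof.
rewrite /Ginvar sum_mul_trace up2_skew_trmx ?dual_skew // mulmxN linearN /= !mulmxA.
by rewrite mxtrace_mulC /up1 !mulmxA mulrN mulNr opprK.
Qed.

Local Notation conj A := (P *m A *m invmx P).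

Lemma up1_frame T : up1 g T = conj (eta *m (P^T *m T *m P)).
Proof. by rewrite /up1 (ginv_frame P_unit gP) !mulmxA mulmxK. Qed.

Lemma field_identities :
  [/\ M *m M - D *m D = - (Finvar g F)%:M, M *m D = (Ginvar o g F)%:M & D *m M = M *m D].
Proof.
set X := P^T *m F *m P.
have X_skew : X^T = - X by rewrite /X !trmx_mul trmxK F_skew mulNmx mulmxN mulmxA.
pose e := (if o then 1 else -1) * Num.sqrt `|\det g| * \det P.
have e2 : e ^+ 2 = 1 := volume_factor_sq gP o.
have [AA AC CA] := minkowski_field_identities X_skew.
set A := eta *m X in AA AC CA; set C := eta *m hodge_eta X in AA AC CA.
have hM : M = conj A by apply: up1_frame.
have hD : D = conj (e *: C) by rewrite up1_frame (dual_frame _ _ P_unit gP) -/e -scalemxAr.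
have MD : M *m D = conj (e *: (A *m C)) by rewrite hM hD conj_mulmx // -scalemxAr.
have DM : D *m M = conj (e *: (C *m A)) by rewrite hM hD conj_mulmx // -scalemxAl.
have DD : D *m D = conj (C *m C).
  by rewrite hD conj_mulmx // -scalemxAl -[C *m (_ *: _)]scalemxAr scalerA -expr2 e2 scale1r.
rewrite Finvar_trace Ginvar_trace MD DM CA; split => //.
- rewrite DD hM !conj_mulmx // -mulmxBl -mulmxBr AA conj_scalar // mxtrace_conj //.
  by rewrite mulNr raddfN opprK.
- rewrite {1}AC scale_scalar_mx conj_scalar // mxtrace_conj // linearZ /=.
  by congr (_%:M); rewrite mulrCA.
Qed.
End FieldInvariants.

Section Components.
Variable R : rcfType.
Implicit Types (g T : 'M[R]_4) (x y p : 'I_4 -> R).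

Definition rv x : 'rV[R]_4 := \row_j x j.

Lemma bil_form (A : 'M[R]_4) x y : bil A x y = bform A (rv x) (rv y).
Proof.
rewrite /bil /bform !mxE; under [RHS]eq_bigr do rewrite !mxE big_distrl /=.
rewrite exchange_big /=; apply: eq_bigr => a _; apply: eq_bigr => b _.
by rewrite !mxE; ring.
Qed.

Lemma dotv_Kvec s g F p x : dotv (Kvec s g F p) x = bil (gtilde s g F) x p.
Proof.
rewrite /dotv /bil; apply: eq_bigr => a _; rewrite big_distrl /=.
by apply: eq_bigr => b _; ring.
Qed.

Variable g : 'M[R]_4.
Hypothesis ginv_sym : (ginv g)^T = ginv g.

Lemma contr_row T p : T^T = - T -> rv (contr g T p) = - (rv p *m up1 g T).
Proof.
move=> T_skew; have -> : rv (contr g T p) = rv p *m (ginv g)^T *m T^T.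
  apply/rowP => j; rewrite !mxE; apply: eq_bigr => b _.
  by rewrite !mxE /upv mulrC; congr (_ * _); apply: eq_bigr => c _; rewrite !mxE mulrC.
by rewrite ginv_sym T_skew mulmxN mulmxA.
Qed.

Lemma up1_ginv_skew T : T^T = - T -> (up1 g T *m ginv g)^T = - (up1 g T *m ginv g).
Proof. by move=> T_skew; rewrite /up1 !trmx_mul ginv_sym T_skew mulNmx mulmxN mulmxA. Qed.

Lemma gtilde_up1 s F : F^T = - F ->
  gtilde s g F = ginv g - s *: (up1 g F *m up1 g F *m ginv g).
Proof.
move=> F_skew; have -> : gtilde s g F = ginv g + s *: (up2 g F *m (up1 g F)^T).
  by apply/matrixP => a b; rewrite !mxE; congr (_ + _ * _); apply: eq_bigr => c _; rewrite !mxE.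
by rewrite /up2 /up1 trmx_mul ginv_sym F_skew mulNmx mulmxN scalerN !mulmxA.
Qed.
End Components.

Theorem proposition3 (R : rcfType) (o : bool) (g F : 'M[R]_4)
    (LF LFF LFG LGG : R) (plus : bool) (p : 'I_4 -> R) :
  lorentzian g -> antisym F ->
  let Fi := Finvar g F in
  let Gi := Ginvar o g F in
  (* standing assumptions *)
  LF != 0 -> cM LF LFF LFG LGG Fi Gi != 0 ->
  (forall b : bool, 1 + sigma_pm b LF LFF LFG LGG Fi Gi * Fi
                     - (sigma_pm b LF LFF LFG LGG Fi Gi) ^+ 2 * Gi ^+ 2 != 0) ->
  (* sigma_pm is real *)
  0 <= discr LF LFF LFG LGG Fi Gi ->
  (exists i, p i != 0) ->
  let sigma := sigma_pm plus LF LFF LFG LGG Fi Gi in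
  let u := contr g F p in
  let v := contr g (dual o g F) p in
  let gt := gtilde sigma g F in
  let K := Kvec sigma g F p in
  bil (ginv g) p p + sigma * bil (ginv g) u u = 0 ->
  let Q := bil (ginv g) u u * (1 + sigma * Fi - sigma ^+ 2 * Gi ^+ 2) in
  [/\ bil gt p u = 0, bil gt p v = 0, bil gt u v = 0,
      bil gt u u = Q & bil gt v v = Q] /\
  [/\ dotv K p = 0, dotv K u = 0 & dotv K v = 0].
Proof.
move=> [_ [P [P_unit gP]]] F_anti Fi Gi _ _ _ _ _ sigma u v gt K null Q.
have F_skew : F^T = - F by apply/matrixP => a b; rewrite !mxE F_anti.
have h_sym := ginv_sym P_unit gP.
have dF_skew := dual_skew o g F.
have [MM_DD MD DM] := field_identities o P_unit gP F_skew.
have MM : up1 g F *m up1 g F = up1 g (dual o g F) *m up1 g (dual o g F) - Fi%:M.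
  by rewrite -MM_DD addrC subrK.
move: null; rewrite /Q /K /gt !dotv_Kvec !bil_form (contr_row h_sym p F_skew).
rewrite (contr_row h_sym p dF_skew) (gtilde_up1 h_sym _ F_skew) => null.
apply: (effective_metric_orthogonality h_sym _ _ MD _ MM null).
- exact: up1_ginv_skew.
- exact: up1_ginv_skew.
- by rewrite DM.
Qed.
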